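(* Let $\langle T,\le\rangle$ be a temporal flow and $v$ a temporal assignment over variables on $T$ (extended to formulas pointwise as in the context). Then for every formula $\varphi$, the function $v(\varphi,\cdot)$ is admissible and $s^v(\varphi)=d(v(\varphi,\cdot))$.
   Context: A temporal flow is a totally ordered infinite set $\langle T,\le\rangle$. On $\{0,\frac12,1\}$ put $\neg_3x=1-x$, $x\to_3y=\min(1,1-x+y)$. A function $f:T\to\{0,\frac12,1\}$ is admissible if it is constant, or there exist $i\in\{0,1\}$ and $t\in T$ (not the minimum of $T$, if $T$ has one) with $f(t')=i$ for all $t'\ge t$ and $f(t'')=\frac12$ for all $t''<t$. Let $T'=T\cup\{-\infty\}$; for admissible $f$ define $d(f)=\langle-\infty,c\rangle$ if $f$ is constant with value $c$, and $d(f)=\langle t,i\rangle$ in the second case. Let $T''=(T'\times\{0,1\})\cup\{\langle-\infty,\frac12\rangle\}$, totally ordered by: for $t<t'$ in $T$, $\langle-\infty,0\rangle<\langle t,0\rangle<\langle t',0\rangle<\langle-\infty,\frac12\rangle<\langle t',1\rangle<\langle t,1\rangle<\langle-\infty,1\rangle$. Formulas are built from variables and $\bot$ using $\neg$ and $\to$. A temporal assignment over variables is $v:VAR\times T\to\{0,\frac12,1\}$ with each $v(x,\cdot)$ admissible; it is extended to formulas by $v(\bot,t)=0$, $v(\neg\psi,t)=\neg_3v(\psi,t)$, and $v(\psi\to\chi,t)=v(\psi,t)\to_3v(\chi,t)$ if this equals $v(\psi,t')\to_3v(\chi,t')$ for every $t'\ge t$, and $\frac12$ otherwise. The map $s^v$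 from formulas to $T''$: $s^v(x)=d(v(x,\cdot))$; $s^v(\bot)=\langle-\infty,0\rangle$; if $s^v(\varphi)=\langle a,m\rangle$ then $s^v(\neg\varphi)=\langle a,1-m\rangle$; $s^v(\varphi\to\psi)=\langle-\infty,1\rangle$ if $s^v(\varphi)\le s^v(\psi)$ in $T''$, otherwise the maximum in $T''$ of $s^v(\neg\varphi)$ and $s^v(\psi)$. *)

From HB Require Import structures.
From mathcomp Require Import all_boot all_order.
From Stdlib Require Import ClassicalEpsilon ClassicalDescription.
Set Implicit Arguments. Unset Strict Implicit. Unset Printing Implicit Defensive.
Import Order.TTheory.
Local Open Scope order_scope.

Inductive val3 := V0 | Vh | V1.

(* value times 2, as a natural number *)
Definition v3nat (x : val3) : nat := match x with V0 => 0 | Vh => 1 | V1 => 2 end.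
Definition natv3 (n : nat) : val3 :=
  match n with 0 => V0 | 1 => Vh | _ => V1 end.

(* neg_3 x = 1 - x *)
Definition neg3 (x : val3) : val3 := natv3 (2 - v3nat x).
(* x ->_3 y = min(1, 1 - x + y) *)
Definition imp3 (x y : val3) : val3 := natv3 (minn 2 ((2 - v3nat x) + v3nat y)).

Definition infinite_type (T : eqType) : Prop := forall s : seq T, exists t, t \notin s.

Section Temporal.
Context {disp : Order.disp_t} {T : orderType disp}.

Definition admissible (f : T -> val3) : Prop :=
  (exists c, forall t, f t = c) \/
  (exists i t, (i = V0 \/ i = V1) /\ (exists t0, t0 < t) /\
     (forall t', t <= t' -> f t' = i) /\ (forall t'', t'' < t -> f t'' = Vh)).

(* T'' = (T' x {0,1}) u {<-oo,1/2>}, with T' = T u {-oo} encoded as option T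
   (None = -oo).  PZ a = <a,0>, PH = <-oo,1/2>, PO a = <a,1>. *)
Inductive Tpp := PZ of option T | PH | PO of option T.

Definition leT' (a b : option T) : bool :=
  match a, b with
  | None, _ => true
  | Some _, None => false
  | Some x, Some y => x <= y
  end.

Definition leTpp (p q : Tpp) : bool :=
  match p, q with
  | PZ a, PZ b => leT' a b
  | PZ _, _ => true
  | PH, PZ _ => false
  | PH, _ => true
  | PO _, PZ _ => false
  | PO _, PH => false
  | PO a, PO b => leT' b a
  end.

Definition maxTpp (p q : Tpp) : Tpp := if leTpp p q then q else p.

Definition negTpp (p : Tpp) : Tpp :=
  match p with PZ a => PO a | PH => PH | PO a => PZ a end.

(* the point <a,m> of T'' (m = 1/2 only used with a = -oo) *)
Definition pt (a : option T) (m : val3) : Tpp :=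
  match m with V0 => PZ a | Vh => PH | V1 => PO a end.

Definition d_spec (f : T -> val3) (p : Tpp) : Prop :=
  (exists c, (forall t, f t = c) /\ p = pt None c) \/
  (exists i t, (i = V0 \/ i = V1) /\ (exists t0, t0 < t) /\
     (forall t', t <= t' -> f t' = i) /\ (forall t'', t'' < t -> f t'' = Vh) /\
     p = pt (Some t) i).

(* d(f): the (unique, for admissible f) point satisfying d_spec *)
Definition dfun (f : T -> val3) : Tpp := epsilon (inhabits PH) (d_spec f).

Inductive form (VAR : Type) :=
  | FVar of VAR
  | FBot
  | FNeg of form VAR
  | FImp of form VAR & form VAR.

Arguments FBot {VAR}.

Fixpoint eval {VAR : Type} (v : VAR -> T -> val3) (phi : form VAR) (t : T) : val3 :=
  match phi with
  | FVar x => v x t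
  | FBot => V0
  | FNeg p => neg3 (eval v p t)
  | FImp p q =>
      let a := imp3 (eval v p t) (eval v q t) in
      if excluded_middle_informative
           (forall t', t <= t' -> imp3 (eval v p t') (eval v q t') = a)
      then a else Vh
  end.

Fixpoint sv {VAR : Type} (v : VAR -> T -> val3) (phi : form VAR) : Tpp :=
  match phi with
  | FVar x => dfun (v x)
  | FBot => PZ None
  | FNeg p => negTpp (sv v p)
  | FImp p q =>
      if leTpp (sv v p) (sv v q) then PO None
      else maxTpp (negTpp (sv v p)) (sv v q)
  end.

End Temporal.

From mathcomp Require Import all_boot all_order.
From Stdlib Require Import ClassicalEpsilon ClassicalDescription Classical.
Set Implicit Arguments. Unset Strict Implicit. Unset Printing Implicit Defensive.
Import Order.TTheory.
Local Open Scope order_scope.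

(* A point <a,m> of T'' codes the function that is 1/2 strictly before a and m
   from a on; on the points that are values of d, d inverts this coding.  So it
   suffices to show, by induction on the formula, that v(phi,.) is the function
   coded by s^v(phi).  Negation acts on codes by <a,m> |-> <a,1-m>.  For an
   implication, the pointwise ->_3 of two coded functions, replaced by 1/2
   wherever it still changes later on, is the function coded by the T''
   implication: a finite case analysis on the relative position of the two
   time points and of the current instant. *)

Section TemporalPoints.
Context {disp : Order.disp_t} {T : orderType disp}.

Definition fun_of_Tpp (p : Tpp (T:=T)) (s : T) : val3 :=
  match p with
  | PZ None => V0
  | PZ (Some a) => if s < a then Vh else V0
  | PH => Vh
  | PO None => V1
  | PO (Some a) => if s < a then Vh else V1
  end.

(* <a,i> with a the minimum of T codes the same function as <-oo,i>; such
   points are excluded, as in the definition of admissibility. *)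
Definition proper_Tpp (p : Tpp (T:=T)) : Prop :=
  match p with PZ (Some a) | PO (Some a) => exists t0, t0 < a | _ => True end.

Definition impTpp (p q : Tpp (T:=T)) : Tpp :=
  if leTpp p q then PO None else maxTpp (negTpp p) q.

(* [eval v (FImp p q)] is convertible to [settle] of the pointwise ->_3. *)
Definition settle (h : T -> val3) (t : T) : val3 :=
  if excluded_middle_informative (forall t', t <= t' -> h t' = h t) then h t else Vh.

Ltac order_closure :=
  repeat match goal with
  | H : is_true (?x < ?y) |- _ =>
      lazymatch goal with _ : is_true (x <= y) |- _ => fail | _ => have := ltW H; intro end
  | H1 : is_true (?x <= ?y), H2 : is_true (?y <= ?z) |- _ =>
      lazymatch goal with _ : is_true (x <= z) |- _ => fail | _ => have := le_trans H1 H2; intro end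
  | H1 : is_true (?x < ?y), H2 : is_true (?y <= ?z) |- _ =>
      lazymatch goal with _ : is_true (x < z) |- _ => fail | _ => have := lt_le_trans H1 H2; intro end
  | H1 : is_true (?x <= ?y), H2 : is_true (?y < ?z) |- _ =>
      lazymatch goal with _ : is_true (x < z) |- _ => fail | _ => have := le_lt_trans H1 H2; intro end
  end.

Ltac order_contra :=
  exfalso; order_closure; match goal with H : is_true (?x < ?x) |- _ => by rewrite ltxx in H end.

Ltac case_order :=
  repeat match goal with
  | |- context [?x < ?x] => rewrite ltxx
  | |- context [?x <= ?x] => rewrite lexx
  | |- context [?x < ?y] => case: (ltP x y) => ?
  | |- context [?x <= ?y] => case: (leP x y) => ?
  end.

Ltac finish_val3 :=
  intros; simpl in *;
  repeat match goal with
  | H : is_true true -> _ |- _ => specialize (H isT)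
  | H : ?b = false, H' : is_true ?b |- _ => by rewrite H' in H
  end;
  try discriminate; try done.

Ltac by_order_cases := rewrite /fun_of_Tpp; case_order; finish_val3; order_contra.

Lemma fun_of_negTpp p : fun_of_Tpp (negTpp p) =1 neg3 \o fun_of_Tpp p.
Proof. by case: p => [[a|]| |[a|]] s //=; case: ifP. Qed.

Lemma proper_negTpp p : proper_Tpp p -> proper_Tpp (negTpp p).
Proof. by case: p => [[a|]| |[a|]]. Qed.

Lemma proper_impTpp p q : proper_Tpp p -> proper_Tpp q -> proper_Tpp (impTpp p q).
Proof. by move=> /proper_negTpp ? ?; rewrite /impTpp /maxTpp; case: ifP => //; case: ifP. Qed.

Lemma settle_stable h t : (forall t', t <= t' -> h t' = h t) -> settle h t = h t.
Proof. by rewrite /settle; case: excluded_middle_informative. Qed.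

Lemma settle_unstable h t : ~ (forall t', t <= t' -> h t' = h t) -> settle h t = Vh.
Proof. by rewrite /settle; case: excluded_middle_informative. Qed.

Lemma eq_settle h h' : h =1 h' -> settle h =1 settle h'.
Proof.
move=> eqh t; have stable_iff : (forall t', t <= t' -> h t' = h t) <->
                                (forall t', t <= t' -> h' t' = h' t).
  by split=> st t' /st; rewrite !eqh.
have [st|nst] := classic (forall t', t <= t' -> h t' = h t).
  by rewrite (settle_stable st) (settle_stable (proj1 stable_iff st)) eqh.
by rewrite (settle_unstable nst) settle_unstable // -stable_iff.
Qed.

Lemma imp3_fun_of_Tpp_le p q s :
  leTpp p q -> imp3 (fun_of_Tpp p s) (fun_of_Tpp q s) = V1.
Proof. by case: p => [[a|]| |[a|]]; case: q => [[b|]| |[b|]] //= le_pq; by_order_cases. Qed.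

Lemma settle_imp3 p q :
  settle (fun s => imp3 (fun_of_Tpp p s) (fun_of_Tpp q s)) =1 fun_of_Tpp (impTpp p q).
Proof.
move=> t; rewrite /impTpp; case: ifP => [le_pq|nle_pq].
  by rewrite settle_stable => [|t' _]; rewrite !imp3_fun_of_Tpp_le.
rewrite /maxTpp; have [st|nst] := classic (forall t', t <= t' ->
  imp3 (fun_of_Tpp p t') (fun_of_Tpp q t') = imp3 (fun_of_Tpp p t) (fun_of_Tpp q t)).
- rewrite settle_stable //.
  case: p q nle_pq st => [[a|]| |[a|]] [[b|]| |[b|]] //= nle_pq st;
    try move: (st a); try move: (st b); by_order_cases.
- rewrite settle_unstable //.
  case: p q nle_pq nst => [[a|]| |[a|]] [[b|]| |[b|]] //= nle_pq nst;
    rewrite /fun_of_Tpp; case_order; finish_val3; try order_contra;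
    exfalso; apply: nst => t' le_tt'; by_order_cases.
Qed.

Lemma d_specP (f : T -> val3) p :
  d_spec f p <-> proper_Tpp p /\ f =1 fun_of_Tpp p.
Proof.
split.
- case=> [[c [fc ->]]|[i [a [i01 [lt_a [fa [fbefore ->]]]]]]].
    by case: c fc => fc; split=> //= s; rewrite fc.
  by case: i01 => ?; subst i; split=> // s /=; case: ltP => [/fbefore|/fa].
- case: p => [[a|]| |[a|]] /= [proper_p fp].
  + right; exists V0, a; do !split => //; [by left | move=> s | move=> s] => le_as;
      rewrite fp /=; [by rewrite ltNge le_as | by rewrite le_as].
  + by left; exists V0.
  + by left; exists Vh.
  + right; exists V1, a; do !split => //; [by right | move=> s | move=> s] => le_as;
      rewrite fp /=; [by rewrite ltNge le_as | by rewrite le_as].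
  + by left; exists V1.
Qed.

Lemma fun_of_Tpp_inj (t : T) p q : proper_Tpp p -> proper_Tpp q ->
  fun_of_Tpp p =1 fun_of_Tpp q -> p = q.
Proof.
case: p => [[a|]| |[a|]]; case: q => [[b|]| |[b|]] //= proper_p proper_q epq;
  try case: proper_p => t0 lt_t0a; try case: proper_q => t1 lt_t1b;
  try (case: (ltgtP a b) => [lt_ab|lt_ba|->]; [| |done]);
  try move: (epq a); try move: (epq b); try move: (epq t0); try move: (epq t1);
  move: (epq t); by_order_cases.
Qed.

Lemma admissible_d_spec (f : T -> val3) : admissible f <-> exists p, d_spec f p.
Proof.
split.
- case=> [[c fc]|[i [a [i01 [lt_a [fa fbefore]]]]]].
    by exists (pt None c); left; exists c.
  by exists (pt (Some a) i); right; exists i, a.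
- case=> p [[c [fc _]]|[i [a [i01 [lt_a [fa [fbefore _]]]]]]].
    by left; exists c.
  by right; exists i, a.
Qed.

Lemma dfun_spec (f : T -> val3) : admissible f -> d_spec f (dfun f).
Proof. by move=> /admissible_d_spec; apply: epsilon_spec. Qed.

Lemma eval_sv VAR (v : VAR -> T -> val3) (hv : forall x, admissible (v x)) phi :
  proper_Tpp (sv v phi) /\ eval v phi =1 fun_of_Tpp (sv v phi).
Proof.
elim: phi => [x||p [proper_p IHp]|p [proper_p IHp] q [proper_q IHq]] /=.
- exact/d_specP/dfun_spec.
- by [].
- by split; [apply: proper_negTpp | move=> t; rewrite IHp fun_of_negTpp].
- split; first exact: proper_impTpp.
  by move=> t; rewrite -settle_imp3; apply: eq_settle => s; rewrite IHp IHq.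
Qed.

End TemporalPoints.

Theorem mainTheorem4 (disp : Order.disp_t) (T : orderType disp)
  (Tinf : infinite_type T) (VAR : Type) (v : VAR -> T -> val3)
  (hv : forall x, admissible (v x)) (phi : form VAR) :
  admissible (eval v phi) /\ sv v phi = dfun (eval v phi).
Proof.
have [t0 _] := Tinf [::].
have [proper_sv eval_fun] := eval_sv hv phi.
have d_spec_sv : d_spec (eval v phi) (sv v phi) by apply/d_specP.
have adm : admissible (eval v phi) by apply/admissible_d_spec; exists (sv v phi).
split=> //.
have /d_specP [proper_d d_fun] := dfun_spec adm.
by apply: (fun_of_Tpp_inj t0) => // t; rewrite -eval_fun -d_fun.
Qed.
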